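(* Work in IST. Let $\varepsilon>0$ be infinitesimal, $f:\mathbb{R}\to\mathbb{R}$ $C^1$-limited, $h:\mathbb{R}^2\to\mathbb{R}$ $C^1$-limited and never vanishing, and $g:\mathbb{R}^2\to\mathbb{R}$ of class $C^1$ with $\inf g>0$ and $\inf g$ not infinitesimal. Consider $$\frac{dx}{dt}=h(x,y),\qquad \frac{dy}{dt}=\frac{1}{\varepsilon}g(x,y)\big(f(x)-y\big).$$ Let $(x_0,y_0)$ be a limited point not in the halo of the graph of $f$, and let $(x(t),y(t))$ be the solution with $(x(0),y(0))=(x_0,y_0)$. Then there exists $t^*>0$ such that: (1) $t^*\sim0$; (2) $x(t)\sim x_0$ for all $t\in[0,t^*]$; (3) $y(t^* )\sim f(x_0)$; (4) for every limited $t>t^*$, $y(t)\sim f(x(t))$.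
   Context: Nonstandard vocabulary (IST): infinitesimal = absolute value smaller than every standard positive real; limited = bounded in absolute value by some standard real; $a\sim b$ means $a-b$ infinitesimal; the halo of a set $E\subset\mathbb{R}^2$ is the set of points infinitely close to some point of $E$. A function is $C^1$-limited if it and its (partial) derivatives are bounded by a limited constant. *)

From Stdlib Require Import Reals.
From Coquelicot Require Import Coquelicot.
Open Scope R_scope.

Definition C1_limited_1 (M : R) (f : R -> R) : Prop :=
  exists f' : R -> R,
    (forall x, is_derive f x (f' x)) /\
    (forall x, continuous f' x) /\
    (forall x, Rabs (f x) <= M /\ Rabs (f' x) <= M).

Definition partials_C1 (u ux uy : R -> R -> R) : Prop :=
  forall x y,
    is_derive (fun s => u s y) x (ux x y) /\
    is_derive (fun s => u x s) y (uy x y) /\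
    continuous (fun p : R * R => ux (fst p) (snd p)) (x, y) /\
    continuous (fun p : R * R => uy (fst p) (snd p)) (x, y).

Definition C1_2 (u : R -> R -> R) : Prop :=
  exists ux uy, partials_C1 u ux uy.

Definition C1_limited_2 (M : R) (u : R -> R -> R) : Prop :=
  exists ux uy, partials_C1 u ux uy /\
    forall x y, Rabs (u x y) <= M /\ Rabs (ux x y) <= M /\ Rabs (uy x y) <= M.

Definition is_solution (eps : R) (f : R -> R) (h g : R -> R -> R)
    (x0 y0 : R) (x y : R -> R) : Prop :=
  (forall t, 0 < t ->
     is_derive x t (h (x t) (y t)) /\
     is_derive y t (/ eps * g (x t) (y t) * (f (x t) - y t))) /\
  x 0 = x0 /\ y 0 = y0 /\
  filterlim x (at_right 0) (locally x0) /\
  filterlim y (at_right 0) (locally y0).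

From Stdlib Require Import Reals Lra Psatz Classical.
From Coquelicot Require Import Coquelicot.
Open Scope R_scope.

(* Along a trajectory, V = (y - f x)^2 satisfies
   V' = -2 g V / eps - 2 (y - f x) f'(x) h <= -m b^2 / eps as long as V > b^2
   and eps is small compared to m b / M^2.  Since V(0) <= 4 M^2, V drops below b^2
   after a time ts of order eps and can never climb back above it.  Meanwhile x
   moves with speed at most M, so x(t) stays within M ts of x0 up to ts, and
   y(ts) is within b + M^2 ts of f(x0). *)

Lemma filterlim_Rminus {T : Type} {F : (T -> Prop) -> Prop} {FF : Filter F}
    (u v : T -> R) (lu lv : R) :
  filterlim u F (locally lu) -> filterlim v F (locally lv) ->
  filterlim (fun s => u s - v s) F (locally (lu - lv)).
Proof.
  intros Hu Hv.
  apply (filterlim_comp_2 (G := locally lu) (H := locally (opp lv))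
           u (fun s => opp (v s)) plus Hu).
  - exact (filterlim_comp _ _ _ v opp F (locally lv) _ Hv (filterlim_opp lv)).
  - exact (filterlim_plus lu (opp lv)).
Qed.

Lemma filterlim_at_right_continuous (u : R -> R) (a : R) :
  continuous u a -> filterlim u (at_right a) (locally (u a)).
Proof. intros Hu. eapply filterlim_filter_le_1; [apply filter_le_within|exact Hu]. Qed.

Lemma fast_fiber_contraction eps m b K G P z :
  0 < eps -> 0 < b -> m <= G -> Rabs P <= K -> 2 * eps * K <= m * b -> b < Rabs z ->
  2 * z * (/ eps * G * - z - P) <= - (m * b ^ 2 / eps).
Proof.
  intros Heps Hb HG HP Hsmall Hz.
  assert (HzP : - (Rabs z * K) <= z * P).
  { pose proof (Rle_abs (- (z * P))) as H. rewrite Rabs_Ropp, Rabs_mult in H.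
    pose proof (Rabs_pos z). nra. }
  assert (Hz2 : z ^ 2 = Rabs z ^ 2) by (rewrite pow2_abs; reflexivity).
  assert (Hm : 0 <= m) by (pose proof (Rabs_pos P); nra).
  assert (Hkey : - 2 * G * z ^ 2 - 2 * eps * z * P <= - m * b ^ 2).
  { rewrite Hz2. set (a := Rabs z) in *.
    assert (0 <= (G - m) * a ^ 2) by (apply Rmult_le_pos; nra).
    assert (0 <= eps * (a * K + z * P)) by (apply Rmult_le_pos; lra).
    assert (0 <= a * (m * b - 2 * eps * K)) by (apply Rmult_le_pos; lra).
    assert (0 <= m * (a - b) * (a + b)) by (apply Rmult_le_pos; [apply Rmult_le_pos|]; lra).
    nra. }
  replace (2 * z * (/ eps * G * - z - P)) with ((- 2 * G * z ^ 2 - 2 * eps * z * P) / eps)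
    by (field; lra).
  replace (- (m * b ^ 2 / eps)) with ((- m * b ^ 2) / eps) by (field; lra).
  apply Rmult_le_compat_r; [left; apply Rinv_0_lt_compat|]; lra.
Qed.

Lemma increment_le_of_derive_le (F dF : R -> R) s t a :
  0 < s < t -> (forall u, 0 < u -> is_derive F u (dF u)) ->
  (forall u, s < u < t -> dF u <= a) -> F t - F s <= a * (t - s).
Proof.
  intros [Hs Hst] HD Ha.
  destruct (MVT_cor2 F dF s t) as [c [Hc Hcst]]; [lra| |].
  - intros c Hc. apply is_derive_Reals, HD. lra.
  - rewrite Hc. apply Rmult_le_compat_r; [lra|apply Ha; lra].
Qed.

Lemma increment_from_0_le_of_derive_le (F dF : R -> R) t a :
  0 < t -> (forall u, 0 < u -> is_derive F u (dF u)) ->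
  (forall u, 0 < u < t -> dF u <= a) ->
  filterlim F (at_right 0) (locally (F 0)) -> F t - F 0 <= a * t.
Proof.
  intros Ht HD Ha HF.
  assert (Hlim : filterlim (fun s => F s - a * s) (at_right 0) (locally (F 0 - a * 0))).
  { apply filterlim_Rminus; [exact HF|].
    apply (filterlim_at_right_continuous (fun s => a * s)).
    apply (ex_derive_continuous (fun s => a * s)). auto_derive. exact I. }
  assert (Hle : Rbar_le (F t - a * t) (F 0 - a * 0)).
  { apply (filterlim_le (F := at_right 0) (fun _ => F t - a * t) (fun s => F s - a * s)).
    - exists (mkposreal t Ht). intros s Hs Hs0.
      change (Rabs (s - 0) < t) in Hs. rewrite Rminus_0_r in Hs.
      apply Rabs_def2 in Hs.
      pose proof (increment_le_of_derive_le F dF s t a ltac:(lra) HD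
                    (fun u Hu => Ha u ltac:(lra))).
      lra.
    - apply filterlim_const.
    - exact Hlim. }
  simpl in Hle. lra.
Qed.

Lemma abs_increment_from_0_le_of_derive_bound (F dF : R -> R) t a :
  0 <= t -> (forall u, 0 < u -> is_derive F u (dF u)) ->
  (forall u, 0 < u -> Rabs (dF u) <= a) ->
  filterlim F (at_right 0) (locally (F 0)) -> Rabs (F t - F 0) <= a * t.
Proof.
  intros [Ht|<-] HD Ha HF; [|rewrite Rminus_diag, Rabs_R0; lra].
  assert (Hup : F t - F 0 <= a * t).
  { apply (increment_from_0_le_of_derive_le F dF); auto.
    intros u [Hu _]. exact (Rle_trans _ _ _ (Rle_abs _) (Ha u Hu)). }
  assert (Hdown : - F t - - F 0 <= a * t).
  { apply (increment_from_0_le_of_derive_le (fun s => - F s) (fun s => - dF s)); auto.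
    - intros u Hu. exact (is_derive_opp F u (dF u) (HD u Hu)).
    - intros u [Hu _]. specialize (Ha u Hu). rewrite <- Rabs_Ropp in Ha.
      exact (Rle_trans _ _ _ (Rle_abs _) Ha).
    - exact (filterlim_comp _ _ _ F Ropp _ _ _ HF (filterlim_opp (F 0))). }
  apply Rabs_le. lra.
Qed.

Lemma last_exit_below (V : R -> R) c t :
  (forall u, 0 < u -> continuous V u) -> c < V t ->
  (exists u, 0 < u <= t /\ V u <= c) ->
  exists s, 0 < s < t /\ V s <= c /\ forall u, s < u <= t -> c < V u.
Proof.
  intros HV Ht [u0 Hu0].
  set (A := fun u => 0 < u <= t /\ V u <= c).
  destruct (completeness A) as [s [Hub Hlub]].
  { exists t. intros u Hu. apply Hu. }
  { exists u0. exact Hu0. }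
  assert (Hs0 : 0 < s) by (specialize (Hub u0 Hu0); lra).
  assert (Hst : s <= t) by (apply Hlub; intros u Hu; apply Hu).
  assert (Hs : V s <= c).
  { apply Rnot_lt_le. intros Hcs.
    destruct (HV s Hs0 (fun z => c < z) (open_gt c (V s) Hcs)) as [d Hd].
    enough (Hd' : s <= s - d) by (pose proof (cond_pos d); lra).
    apply Hlub. intros u Hu. apply Rnot_lt_le. intros Hud.
    assert (Hus : u <= s) by (apply Hub, Hu).
    assert (Hball : Rabs (u - s) < d) by (apply Rabs_def1; lra).
    specialize (Hd u Hball). destruct Hu. lra. }
  exists s. split; [|split; [exact Hs|]].
  - split; [exact Hs0|]. destruct Hst as [Hst | ->]; [exact Hst|lra].
  - intros u Hu. apply Rnot_le_lt. intros Huc.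
    assert (u <= s) by (apply Hub; split; lra). lra.
Qed.

Lemma decay_to_threshold (V dV : R -> R) c r t :
  0 < r -> 0 < t -> (forall u, 0 < u -> is_derive V u (dV u)) ->
  (forall u, 0 < u -> c < V u -> dV u <= - r) ->
  filterlim V (at_right 0) (locally (V 0)) -> V t <= Rmax c (V 0 - r * t).
Proof.
  intros Hr Ht HD Hdecay HV0.
  destruct (Rle_lt_dec (V t) c) as [Hle|Hgt].
  { exact (Rle_trans _ _ _ Hle (Rmax_l _ _)). }
  destruct (classic (exists u, 0 < u <= t /\ V u <= c)) as [Hentry|Habove].
  - exfalso.
    assert (Hcont : forall u, 0 < u -> continuous V u).
    { intros u Hu. apply (ex_derive_continuous V). exists (dV u). exact (HD u Hu). }
    destruct (last_exit_below V c t Hcont Hgt Hentry) as [s [Hst [Hs Hafter]]].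
    assert (Hinc := increment_le_of_derive_le V dV s t (- r) Hst HD
                      (fun u Hu => Hdecay u ltac:(lra) (Hafter u ltac:(lra)))).
    nra.
  - apply (Rle_trans _ (V 0 - r * t)); [|apply Rmax_r].
    enough (V t - V 0 <= - r * t) by lra.
    apply (increment_from_0_le_of_derive_le V dV); auto.
    intros u Hu. apply Hdecay; [lra|]. apply Rnot_le_lt. intros Hu'.
    apply Habove. exists u. split; [lra|exact Hu'].
Qed.

Lemma is_derive_sq_deviation (x y f f' : R -> R) (dx dy t : R) :
  is_derive x t dx -> is_derive y t dy -> is_derive f (x t) (f' (x t)) ->
  is_derive (fun u => (y u - f (x u)) ^ 2) t
    (2 * (y t - f (x t)) * (dy - f' (x t) * dx)).
Proof.
  intros Hx Hy Hf.
  assert (Hfx : is_derive (fun u => f (x u)) t (f' (x t) * dx)).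
  { rewrite Rmult_comm. exact (is_derive_comp f x t (f' (x t)) dx Hf Hx). }
  assert (Hdev := is_derive_minus _ _ _ _ _ Hy Hfx).
  assert (Hsq := is_derive_pow _ 2 t _ Hdev).
  simpl in Hsq. replace (2 * (y t - f (x t)) * (dy - f' (x t) * dx))
    with (2 * (dy - f' (x t) * dx) * ((y t - f (x t)) * 1)) by ring.
  exact Hsq.
Qed.

Section SlowFastSystem.

Variables (eps M m b : R) (f f' : R -> R) (h g : R -> R -> R) (x0 y0 : R) (x y : R -> R).
Hypothesis Heps : 0 < eps.
Hypothesis Hm : 0 < m.
Hypothesis Hb : 0 < b.
Hypothesis Hf' : forall u, is_derive f u (f' u).
Hypothesis Hf_bound : forall u, Rabs (f u) <= M /\ Rabs (f' u) <= M.
Hypothesis Hh_bound : forall a c, Rabs (h a c) <= M.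
Hypothesis Hg_lower : forall a c, m <= g a c.
Hypothesis Hy0 : Rabs y0 <= M.
Hypothesis Heps_small : 2 * eps * M ^ 2 <= m * b.
Hypothesis Hsol : is_solution eps f h g x0 y0 x y.

Lemma slow_drift t : 0 <= t -> Rabs (x t - x0) <= M * t.
Proof.
  destruct Hsol as [Hder [Hx0 [_ [Hxlim _]]]].
  intros Ht. rewrite <- Hx0.
  apply (abs_increment_from_0_le_of_derive_bound x (fun u => h (x u) (y u))); auto.
  - intros u Hu. apply (Hder u Hu).
  - rewrite Hx0. exact Hxlim.
Qed.

Lemma sq_deviation_decay t :
  0 < t -> (y t - f (x t)) ^ 2 <= Rmax (b ^ 2) ((y0 - f x0) ^ 2 - m * b ^ 2 / eps * t).
Proof.
  destruct Hsol as [Hder [Hx0 [Hy0' [Hxlim Hylim]]]].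
  intros Ht.
  set (V := fun u => (y u - f (x u)) ^ 2).
  replace ((y0 - f x0) ^ 2) with (V 0) by (unfold V; rewrite Hx0, Hy0'; reflexivity).
  apply (decay_to_threshold V (fun u => 2 * (y u - f (x u)) *
           (/ eps * g (x u) (y u) * (f (x u) - y u) - f' (x u) * h (x u) (y u))));
    [apply Rdiv_lt_0_compat; [apply Rmult_lt_0_compat; [|apply pow_lt]|]; auto | exact Ht | | |].
  - intros u Hu. destruct (Hder u Hu) as [Hx Hy].
    apply is_derive_sq_deviation; auto.
  - intros u _ Hu. replace (f (x u) - y u) with (- (y u - f (x u))) by ring.
    apply (fast_fiber_contraction eps m b (M ^ 2)); auto.
    + rewrite Rabs_mult. simpl. rewrite Rmult_1_r.
      apply Rmult_le_compat; try apply Rabs_pos; [apply Hf_bound|apply Hh_bound].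
    + apply Rnot_le_lt. intros Hle. unfold V in Hu. rewrite <- (pow2_abs (y u - f (x u))) in Hu.
      pose proof (Rabs_pos (y u - f (x u))). nra.
  - unfold V. rewrite Hx0, Hy0'.
    apply (filterlim_comp _ _ _ (fun u => y u - f (x u)) (fun z => z ^ 2) _ (locally (y0 - f x0))).
    + apply filterlim_Rminus; [exact Hylim|].
      apply (filterlim_comp _ _ _ x f _ (locally x0)); [exact Hxlim|].
      apply (ex_derive_continuous f). exists (f' x0). apply Hf'.
    + apply (ex_derive_continuous (fun z => z ^ 2)). auto_derive. exact I.
Qed.

Lemma deviation_small_after t :
  eps * ((4 * M ^ 2 + 1) / (m * b ^ 2)) <= t -> Rabs (y t - f (x t)) <= b.
Proof.
  intros Ht.
  assert (HM2 := pow2_ge_0 M).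
  assert (Hmb : 0 < m * b ^ 2) by (pose proof (pow_lt b 2 Hb); nra).
  assert (Ht0 : 0 < t).
  { eapply Rlt_le_trans; [|exact Ht].
    apply Rmult_lt_0_compat; [exact Heps|apply Rdiv_lt_0_compat; lra]. }
  assert (Hstart : (y0 - f x0) ^ 2 <= 4 * M ^ 2).
  { rewrite <- pow2_abs.
    assert (Rabs (y0 - f x0) <= 2 * M).
    { pose proof (Rabs_triang y0 (- f x0)). rewrite Rabs_Ropp in H.
      pose proof (proj1 (Hf_bound x0)). unfold Rminus. lra. }
    pose proof (Rabs_pos (y0 - f x0)). nra. }
  assert (Hrate : 4 * M ^ 2 + 1 <= m * b ^ 2 / eps * t).
  { apply (Rmult_le_compat_l (m * b ^ 2 / eps)) in Ht; [|apply Rlt_le, Rdiv_lt_0_compat; lra].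
    replace (m * b ^ 2 / eps * (eps * ((4 * M ^ 2 + 1) / (m * b ^ 2)))) with (4 * M ^ 2 + 1)
      in Ht by (field; lra).
    exact Ht. }
  pose proof (sq_deviation_decay t Ht0) as Hdecay.
  rewrite Rmax_left in Hdecay by (pose proof (pow2_ge_0 b); lra).
  rewrite <- (Rabs_pos_eq b) by lra. apply Rsqr_le_abs_0. unfold Rsqr. nra.
Qed.

Lemma near_initial_fiber_after t :
  eps * ((4 * M ^ 2 + 1) / (m * b ^ 2)) <= t -> Rabs (y t - f x0) <= b + M * (M * t).
Proof.
  intros Ht.
  assert (Ht0 : 0 <= t).
  { eapply Rle_trans; [|exact Ht]. apply Rlt_le, Rmult_lt_0_compat; [exact Heps|].
    apply Rdiv_lt_0_compat; [pose proof (pow2_ge_0 M); lra|].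
    apply Rmult_lt_0_compat; [exact Hm|apply pow_lt, Hb]. }
  assert (HM : 0 <= M) by (pose proof (Rabs_pos y0); lra).
  pose proof (deviation_small_after t Ht) as Hfast.
  pose proof (slow_drift t Ht0) as Hslow.
  pose proof (bounded_variation f f' M x0 (x t) (fun u _ => conj (Hf' u) (proj2 (Hf_bound u))))
    as Hflip.
  replace (y t - f x0) with ((y t - f (x t)) + (f (x t) - f x0)) by ring.
  pose proof (Rabs_triang (y t - f (x t)) (f (x t) - f x0)).
  assert (M * Rabs (x t - x0) <= M * (M * t)) by (apply Rmult_le_compat_l; lra).
  lra.
Qed.

End SlowFastSystem.

Lemma small_parameter_choice M m eta :
  0 < m -> 0 < eta ->
  exists eps0, 0 < eps0 /\ forall eps, 0 < eps < eps0 ->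
    2 * eps * M ^ 2 <= m * (eta / 2) /\
    (1 + M ^ 2) * (eps * ((4 * M ^ 2 + 1) / (m * (eta / 2) ^ 2))) < eta / 4.
Proof.
  intros Hm Heta.
  set (Q := 1 + M ^ 2).
  set (L := (4 * M ^ 2 + 1) / (m * (eta / 2) ^ 2)).
  assert (HQ : 1 <= Q) by (unfold Q; pose proof (pow2_ge_0 M); lra).
  assert (HL : 0 < L).
  { apply Rdiv_lt_0_compat; [pose proof (pow2_ge_0 M); lra|].
    apply Rmult_lt_0_compat; [exact Hm|apply pow_lt; lra]. }
  exists (Rmin (eta / (4 * L * Q)) (m * (eta / 2) / (2 * Q))).
  split; [apply Rmin_glb_lt; apply Rdiv_lt_0_compat; nra|].
  intros eps [Heps Heps0]. split.
  - pose proof (Rlt_le_trans _ _ _ Heps0 (Rmin_r _ _)) as Heps2.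
    apply (Rmult_lt_compat_r (2 * Q)) in Heps2; [|nra].
    replace (m * (eta / 2) / (2 * Q) * (2 * Q)) with (m * (eta / 2)) in Heps2 by (field; nra).
    unfold Q in Heps2. nra.
  - pose proof (Rlt_le_trans _ _ _ Heps0 (Rmin_l _ _)) as Heps1.
    apply (Rmult_lt_compat_r (4 * L * Q)) in Heps1; [|nra].
    replace (eta / (4 * L * Q) * (4 * L * Q)) with eta in Heps1 by (field; nra).
    fold Q L. nra.
Qed.

Theorem mainTheorem9 :
  forall (M m delta eta T : R),
    0 < m -> 0 < delta -> 0 < eta ->
    exists eps0 : R, 0 < eps0 /\
      forall (eps : R) (f : R -> R) (h g : R -> R -> R) (x0 y0 : R)
             (x y : R -> R),
        0 < eps < eps0 ->
        C1_limited_1 M f ->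
        C1_limited_2 M h ->
        (forall a b, h a b <> 0) ->
        C1_2 g ->
        (forall a b, m <= g a b) ->
        Rabs x0 <= M -> Rabs y0 <= M ->
        (forall u, delta <= sqrt ((x0 - u) ^ 2 + (y0 - f u) ^ 2)) ->
        is_solution eps f h g x0 y0 x y ->
        exists ts : R, 0 < ts /\ ts < eta /\
          (forall t, 0 <= t <= ts -> Rabs (x t - x0) < eta) /\
          Rabs (y ts - f x0) < eta /\
          (forall t, ts < t <= T -> Rabs (y t - f (x t)) < eta).
Proof.
  intros M m delta eta T Hm _ Heta.
  destruct (small_parameter_choice M m eta Hm Heta) as [eps0 [Heps0 Hchoice]].
  exists eps0. split; [exact Heps0|].
  intros eps f h g x0 y0 x y Heps [f' [Hf' [_ Hf_bound]]] [hx [hy [_ Hh_bound]]]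
    _ _ Hg Hx0 Hy0 _ Hsol.
  destruct (Hchoice eps Heps) as [Heps_small Hts_short].
  assert (Hh : forall a c, Rabs (h a c) <= M) by (intros a c; apply Hh_bound).
  assert (Hb : 0 < eta / 2) by lra.
  set (ts := eps * ((4 * M ^ 2 + 1) / (m * (eta / 2) ^ 2))) in Hts_short.
  assert (Hts : 0 < ts).
  { apply Rmult_lt_0_compat; [apply Heps|apply Rdiv_lt_0_compat].
    - pose proof (pow2_ge_0 M); lra.
    - apply Rmult_lt_0_compat; [exact Hm|apply pow_lt, Hb]. }
  assert (HM : 0 <= M) by (pose proof (Rabs_pos x0); lra).
  assert (HMQ : M <= 1 + M ^ 2) by nra.
  pose proof (slow_drift eps M f h g x0 y0 x y Hh Hsol) as Hdrift.
  pose proof (deviation_small_after eps M m (eta / 2) f f' h g x0 y0 x y (proj1 Heps) Hm Hb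
                Hf' Hf_bound Hh Hg Hy0 Heps_small Hsol) as Hclose.
  pose proof (near_initial_fiber_after eps M m (eta / 2) f f' h g x0 y0 x y (proj1 Heps) Hm Hb
                Hf' Hf_bound Hh Hg Hy0 Heps_small Hsol ts (Rle_refl _)) as Hnear.
  exists ts. split; [exact Hts|]. split; [nra|]. split; [|split].
  - intros t Ht. apply (Rle_lt_trans _ (M * t)); [apply Hdrift; lra|nra].
  - apply (Rle_lt_trans _ _ _ Hnear). nra.
  - intros t [Ht _]. apply (Rle_lt_trans _ (eta / 2)); [apply Hclose, Rlt_le, Ht|lra].
Qed.
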